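(* Let $X \in \Lambda^2_{14} = \mathfrak{g}_2$. Then there exist a $\mathrm{G}_2$-adapted frame $\mathcal{B} = \{f_1,\dots,f_7\}$ and real numbers $\lambda\geq\nu\geq\mu\geq 0$ with $\lambda = \nu + \mu$ such that the matrix $[X]_{\mathcal{B}}$, whose $(i,j)$ entry is $X(f_i,f_j)$, is block diagonal with blocks $$ (0), \quad \begin{pmatrix} 0 & -\mu \\ \mu & 0\end{pmatrix}, \quad \begin{pmatrix} 0 & -\nu \\ \nu & 0\end{pmatrix}, \quad \begin{pmatrix} 0 & -\lambda \\ \lambda & 0\end{pmatrix} $$ (in this order, occupying indices $\{1\},\{2,3\},\{4,5\},\{6,7\}$), with all other entries zero. Moreover, exactly three cases occur: (i) if $\lambda=\mu$, then $\lambda=\mu=\nu=0$ and $X=0$; (ii) if $\lambda>0$ and $\mu=0$, then $\lambda=\nu$, $\operatorname{rank}X = 4$, and $\ker X$ is the associative $3$-plane spanned by $\{f_1,f_2,f_3\}$; (iii) if $\lambda>\mu>0$, then $\operatorname{rank}X=6$ and $\ker X$ is spanned by $f_1$.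
   Context: Equip $\mathbb{R}^7$ with its standard inner product, orientation and basis. Let $\varphi = e_{123} - e_{167} - e_{527} - e_{563} - e_{415} - e_{426} - e_{437}$ ($e_{ijk} = e_i\wedge e_j\wedge e_k$) and define $\times$ by $\langle u\times v,w\rangle = \varphi(u,v,w)$. A skew bilinear form $X$ is identified with the operator $X$ given by $X(a,b)=\langle X(a),b\rangle$. $\Lambda^2_{14}=\mathfrak{g}_2$ is the set of skew bilinear forms $X$ with $X(v\times w) = X(v)\times w + v\times X(w)$ for all $v,w$. A $\mathrm{G}_2$-adapted frame is an oriented orthonormal basis $\{f_1,\dots,f_7\}$ with $f_3 = f_1\times f_2$, $f_5 = f_1\times f_4$, $f_6 = f_2\times f_4$, $f_7 = f_3\times f_4$. A $3$-dimensional subspace is associative if closed under $\times$. *)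

(* Vectors of R^7 are row vectors 'rV[R]_7; indices are
   0-based ('I_7), so the paper's e_1..e_7 / f_1..f_7 are indices 0..6. *)
From HB Require Import structures.
From mathcomp Require Import all_boot all_order all_algebra.
From mathcomp Require Import reals.
Set Implicit Arguments. Unset Strict Implicit. Unset Printing Implicit Defensive.
Import Order.TTheory GRing.Theory Num.Theory.
Local Open Scope ring_scope.

Section G2.
Variable R : realType.
Notation vec := 'rV[R]_7.

Definition dot (u v : vec) : R := \sum_(i < 7) u 0 i * v 0 i.

Definition ev (k : 'I_7) : vec := delta_mx 0 k.

(* e_{ijk} = e_i /\ e_j /\ e_k evaluated on (u,v,w); indices 1-based as in paper *)
Definition e3 (i j k : nat) (u v w : vec) : R :=
  let c (x : vec) (n : nat) := x 0 (inord n.-1 : 'I_7) in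
  c u i * (c v j * c w k - c v k * c w j)
  - c u j * (c v i * c w k - c v k * c w i)
  + c u k * (c v i * c w j - c v j * c w i).

Definition phi (u v w : vec) : R :=
  e3 1 2 3 u v w - e3 1 6 7 u v w - e3 5 2 7 u v w - e3 5 6 3 u v w
  - e3 4 1 5 u v w - e3 4 2 6 u v w - e3 4 3 7 u v w.

Definition cross (u v : vec) : vec := \row_(k < 7) phi u v (ev k).

(* A bilinear form X on R^7 is represented by the matrix M with
   X(a,b) = a M b^T; the associated operator (X(a,b) = <X(a),b>) is
   a |-> a *m M. *)
Definition bform (M : 'M[R]_7) (a b : vec) : R := (a *m M *m b^T) 0 0.
Definition skew (M : 'M[R]_7) : Prop := M^T = - M.

Definition in_g2 (M : 'M[R]_7) : Prop :=
  skew M /\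
  forall v w : vec, cross v w *m M = cross (v *m M) w + cross v (w *m M).

Definition G2_adapted (F : 'M[R]_7) : Prop :=
  let f (n : nat) : vec := row (inord n.-1) F in
  [/\ forall i j : 'I_7, dot (row i F) (row j F) = (i == j)%:R,
      0 < \det F &
      [/\ f 3 = cross (f 1) (f 2),
          f 5 = cross (f 1) (f 4),
          f 6 = cross (f 2) (f 4) &
          f 7 = cross (f 3) (f 4)]].

Definition normal_form (mu nu lam : R) : 'M[R]_7 :=
  \matrix_(i < 7, j < 7)
    match nat_of_ord i, nat_of_ord j with
    | 1, 2 => - mu | 2, 1 => mu
    | 3, 4 => - nu | 4, 3 => nu
    | 5, 6 => - lam | 6, 5 => lam
    | _, _ => 0
    end.

Definition associative_set (S : vec -> Prop) : Prop :=
  forall u v, S u -> S v -> S (cross u v).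

Definition span3 (a b c : vec) (x : vec) : Prop :=
  exists c1 c2 c3 : R, x = c1 *: a + c2 *: b + c3 *: c.
Definition span1 (a : vec) (x : vec) : Prop := exists c1 : R, x = c1 *: a.

Definition kerX (M : 'M[R]_7) (x : vec) : Prop := x *m M = 0.

End G2.

From HB Require Import structures.
From mathcomp Require Import all_boot all_order all_algebra all_fingroup.
From mathcomp Require Import reals.
From mathcomp Require Import ring lra zify.
From mathcomp Require Import polyrcf complex.
Set Implicit Arguments. Unset Strict Implicit. Unset Printing Implicit Defensive.
Import Order.TTheory GRing.Theory Num.Theory.
Local Open Scope ring_scope.

(* A skew element X of g2 has a kernel vector a (odd dimension), and X commutes with
   J_a = a x -, so X J_a is symmetric. Its unit eigenvectors b orthogonal to a satisfy
   b X = - mu a x b, and a second one c, chosen orthogonal to the associative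
   3-plane <a, b, a x b>, makes (a, b, c) a Cayley triple. Since X is a derivation of the cross
   product, it rotates the planes <b, a x b>, <c, a x c>, <b x c, (a x b) x c> of the
   G2-frame of (a, b, c) by mu, nu and mu + nu. Exchanging b and c, replacing c by b x c,
   or a by -a permutes or negates (mu, nu, -(mu + nu)), which allows 0 <= mu <= nu.
   The frame is positively oriented because the 7-form <a, -> /\ <a x -, ->^3 is a
   negative multiple of the determinant and is -1 on the frame; kernel and rank are
   read off the frame. *)

Section AlternatingForms.
Variables (R : comNzRingType) (n : nat).

Definition row_subst (A : 'M[R]_n) (i0 : 'I_n) (v : 'rV[R]_n) : 'M[R]_n :=
  \matrix_(i, j) if i == i0 then v 0 j else A i j.

Definition multilinear (w : 'M[R]_n -> R) := forall A i0 (a : R) (v u : 'rV_n),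
  w (row_subst A i0 (a *: v + u)) = a * w (row_subst A i0 v) + w (row_subst A i0 u).

Definition alternating (w : 'M[R]_n -> R) := forall A (i1 i2 : 'I_n),
  i1 != i2 -> row i1 A = row i2 A -> w A = 0.

Lemma row_row_subst A i0 v i :
  row i (row_subst A i0 v) = if i == i0 then v else row i A.
Proof. by apply/rowP => j; rewrite !mxE; case: eqP => _; rewrite ?mxE // ord1. Qed.

Lemma row_subst_id A i0 : row_subst A i0 (row i0 A) = A.
Proof. by apply/matrixP => i j; rewrite !mxE; case: eqP => // ->. Qed.

Lemma row_substC A i1 i2 v u : i1 != i2 ->
  row_subst (row_subst A i1 v) i2 u = row_subst (row_subst A i2 u) i1 v.
Proof.
move=> i12; apply/matrixP => i j; rewrite !mxE.
case: (eqVneq i i2) => [e2|n2]; case: (eqVneq i i1) => [e1|n1] //.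
by move: i12; rewrite -e1 -e2 eqxx.
Qed.

Lemma det_multilinear : multilinear determinant.
Proof.
move=> A i0 a v u; rewrite -[X in _ = _ + X]mul1r.
apply: (determinant_multilinear (i0 := i0)); first by rewrite !row_row_subst eqxx scale1r.
  by apply/matrixP => i j; rewrite !mxE eq_sym (negPf (neq_lift _ _)).
by apply/matrixP => i j; rewrite !mxE eq_sym (negPf (neq_lift _ _)).
Qed.

Lemma det_alternating : alternating determinant.
Proof.
move=> A i1 i2 i12 eq12; apply: (determinant_alternate i12) => j.
by have /rowP/(_ j) := eq12; rewrite !mxE.
Qed.

Section Uniqueness.
Variable w : 'M[R]_n -> R.
Hypotheses (w_lin : multilinear w) (w_alt : alternating w).

Lemma multilinear_row0 A i0 : w (row_subst A i0 0) = 0.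
Proof.
have := w_lin A i0 1 0 0; rewrite scaler0 addr0 mul1r.
by move/(congr1 (fun t => t - w (row_subst A i0 0))); rewrite subrr addrK.
Qed.

Lemma multilinear_sum A i0 (c : 'I_n -> R) :
  w (row_subst A i0 (\sum_j c j *: delta_mx 0 j)) =
  \sum_j c j * w (row_subst A i0 (delta_mx 0 j)).
Proof.
apply: (big_rec2 (fun (s : R) (v : 'rV_n) => w (row_subst A i0 v) = s)).
  exact: multilinear_row0.
by move=> j s v _ <-; rewrite w_lin.
Qed.

Lemma alternating_xrow A i1 i2 : i1 != i2 -> w (xrow i1 i2 A) = - w A.
Proof.
move=> i12; pose M v u := row_subst (row_subst A i1 v) i2 u.
have MA : M (row i1 A) (row i2 A) = A by rewrite /M !row_subst_id.
have MX : M (row i2 A) (row i1 A) = xrow i1 i2 A.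
  apply/matrixP => i j; rewrite xrowEsub !mxE.
  case: (eqVneq i i2) => [->|n2]; first by rewrite tpermR.
  case: (eqVneq i i1) => [->|n1]; first by rewrite tpermL.
  by rewrite tpermD // eq_sym.
have Mvv v : w (M v v) = 0.
  by apply: (w_alt i12); rewrite /M !row_row_subst (negPf i12) !eqxx.
have MDl v1 v2 u : w (M (v1 + v2) u) = w (M v1 u) + w (M v2 u).
  by rewrite /M !(row_substC _ _ _ i12) -{1}[v1]scale1r w_lin mul1r.
have MDr v u1 u2 : w (M v (u1 + u2)) = w (M v u1) + w (M v u2).
  by rewrite /M -{1}[u1]scale1r w_lin mul1r.
have := Mvv (row i1 A + row i2 A).
by rewrite MDl !MDr !Mvv add0r addr0 MA MX => /eqP; rewrite addr_eq0 => /eqP ->; rewrite opprK.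
Qed.

Hypothesis w1 : w 1%:M = 0.

Lemma alternating_perm_mx (s : 'S_n) : w (rowsub s 1%:M) = 0.
Proof.
have [ts -> {s}] := prod_tpermP s; elim: ts => [|t ts IH] /=.
  by move=> _; rewrite big_nil -w1; congr w; apply/matrixP => i j; rewrite !mxE perm1.
rewrite big_cons => /andP[t12 /IH {}IH].
have -> : rowsub (tperm t.1 t.2 * \prod_(t <- ts) tperm t.1 t.2)%g 1%:M
   = xrow t.1 t.2 (rowsub (\prod_(t <- ts) tperm t.1 t.2)%g (1%:M : 'M[R]_n)).
  by apply/matrixP => i j; rewrite xrowEsub !mxE permM.
by rewrite alternating_xrow // IH oppr0.
Qed.

Lemma alternating_basis_rows A :
  (forall i, exists j, row i A = delta_mx 0 j) -> w A = 0.
Proof.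
move=> /fin_all_exists[f Af].
have -> : A = rowsub f 1%:M by apply/row_matrixP => i; rewrite row_rowsub row1 Af.
have [/injectiveP f_inj | /injectivePn[i1 [i2 i12 f12]]] := boolP (injectiveb f).
  have -> : rowsub f 1%:M = rowsub (perm f_inj) (1%:M : 'M[R]_n).
    by apply/matrixP => i j; rewrite !mxE permE.
  exact: alternating_perm_mx.
by apply: (w_alt i12); rewrite !row_rowsub f12.
Qed.

(* Induction on the number of rows not yet expanded on the standard basis. *)
Lemma multilinear_alternating_eq0 A : w A = 0.
Proof.
suff wm m B : (forall i : 'I_n, (m <= i)%N -> exists j, row i B = delta_mx 0 j) -> w B = 0.
  by apply: (wm n) => i; rewrite leqNgt ltn_ord.
elim: m B => [|m IH] B basisB; first by apply: alternating_basis_rows => i; apply: basisB.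
have [mn|nm] := ltnP m n; last by apply: IH => i mi; move: (ltn_ord i); lia.
pose i0 := Ordinal mn.
rewrite -(row_subst_id B i0) [row i0 B]row_sum_delta multilinear_sum big1 // => j _.
rewrite IH ?mulr0 // => i mi; rewrite row_row_subst.
case: eqP => [_|ne]; first by exists j.
apply: basisB; rewrite ltn_neqAle mi andbT; apply/eqP => e; apply: ne.
exact: val_inj.
Qed.

End Uniqueness.

Lemma alternating_detE (w : 'M[R]_n -> R) :
  multilinear w -> alternating w -> forall A, w A = \det A * w 1%:M.
Proof.
move=> w_lin w_alt A; pose p B := w B - \det B * w 1%:M.
have p_lin : multilinear p by move=> B i0 a v u; rewrite /p !w_lin det_multilinear; ring.
have p_alt : alternating p.
  by move=> B i1 i2 i12 e; rewrite /p (w_alt _ _ _ i12 e) (det_alternating i12 e); ring.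
have p1 : p 1%:M = 0 by rewrite /p det1 mul1r subrr.
by apply/eqP; rewrite -subr_eq0; apply/eqP; apply: (multilinear_alternating_eq0 p_lin p_alt p1).
Qed.

End AlternatingForms.

Section SevenForm.
Variables (R : comNzRingType) (L : 'rV[R]_7 -> R) (B : 'rV[R]_7 -> 'rV[R]_7 -> R).
Hypothesis L_lin : forall a v w, L (a *: v + w) = a * L v + L w.
Hypothesis B_linl : forall a v w y, B (a *: v + w) y = a * B v y + B w y.
Hypothesis B_skew : forall x y, B y x = - B x y.
Hypothesis B_xx : forall x, B x x = 0.

Lemma B_linr a v w y : B y (a *: v + w) = a * B y v + B y w.
Proof. by rewrite B_skew B_linl (B_skew v) (B_skew w); ring. Qed.

(* The Pfaffian of the skew matrix (B y_i y_j). *)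
Definition pfaff6 y1 y2 y3 y4 y5 y6 :=
  B y1 y2 * B y3 y4 * B y5 y6 - B y1 y2 * B y3 y5 * B y4 y6 + B y1 y2 * B y3 y6 * B y4 y5
  - B y1 y3 * B y2 y4 * B y5 y6 + B y1 y3 * B y2 y5 * B y4 y6 - B y1 y3 * B y2 y6 * B y4 y5
  + B y1 y4 * B y2 y3 * B y5 y6 - B y1 y4 * B y2 y5 * B y3 y6 + B y1 y4 * B y2 y6 * B y3 y5
  - B y1 y5 * B y2 y3 * B y4 y6 + B y1 y5 * B y2 y4 * B y3 y6 - B y1 y5 * B y2 y6 * B y3 y4
  + B y1 y6 * B y2 y3 * B y4 y5 - B y1 y6 * B y2 y4 * B y3 y5 + B y1 y6 * B y2 y5 * B y3 y4.

(* Up to a constant factor, the 7-form [L /\ B /\ B /\ B]. *)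
Definition wedge_LB3 x1 x2 x3 x4 x5 x6 x7 :=
  L x1 * pfaff6 x2 x3 x4 x5 x6 x7 - L x2 * pfaff6 x1 x3 x4 x5 x6 x7
  + L x3 * pfaff6 x1 x2 x4 x5 x6 x7 - L x4 * pfaff6 x1 x2 x3 x5 x6 x7
  + L x5 * pfaff6 x1 x2 x3 x4 x6 x7 - L x6 * pfaff6 x1 x2 x3 x4 x5 x7
  + L x7 * pfaff6 x1 x2 x3 x4 x5 x6.

Definition wedge_LB3_mx (A : 'M[R]_7) :=
  wedge_LB3 (row (inord 0) A) (row (inord 1) A) (row (inord 2) A)
    (row (inord 3) A) (row (inord 4) A) (row (inord 5) A) (row (inord 6) A).

Lemma inord7_eq (k m : nat) : (k < 7)%N -> (m < 7)%N ->
  ((inord k : 'I_7) == inord m) = (k == m).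
Proof. by move=> hk hm; rewrite -val_eqE /= !inordK. Qed.

Lemma wedge_LB3_multilinear : multilinear wedge_LB3_mx.
Proof.
move=> A i0 a v u; rewrite -(inord_val i0); case: i0 => [k hk] /=.
rewrite /wedge_LB3_mx !row_row_subst !inord7_eq //.
by case: k hk => [|[|[|[|[|[|[|k]]]]]]] hk //=;
  move: (row (inord 0) A) (row (inord 1) A) (row (inord 2) A) (row (inord 3) A)
    (row (inord 4) A) (row (inord 5) A) (row (inord 6) A) => ? ? ? ? ? ? ?;
  rewrite /wedge_LB3 /pfaff6 !(L_lin, B_linl, B_linr); ring.
Qed.

Lemma wedge_LB3_alternating : alternating wedge_LB3_mx.
Proof.
move=> A i1 i2 i12 eq12.
wlog lt12 : i1 i2 i12 eq12 / (i1 < i2)%N.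
  move=> wlog_lt; case: (ltngtP i1 i2) => [lt|gt|e]; first exact: (wlog_lt _ _ i12 eq12 lt).
    by apply: (wlog_lt i2 i1 _ (esym eq12) gt); rewrite eq_sym.
  by move/eqP: i12; case; apply: val_inj.
rewrite -(inord_val i1) -(inord_val i2) in eq12.
case: i1 i2 lt12 eq12 {i12} => [k1 h1] [k2 h2] /= lt12 eq12.
rewrite /wedge_LB3_mx.
(* Generalize the rows to variables (this keeps the rewrites and [ring] cheap), then orient
   every occurrence of the repeated row to the left of [B]: [ring] sees the cancellation. *)
case: k1 h1 lt12 eq12 => [|[|[|[|[|[|[|k1]]]]]]] h1 lt12 eq12 //;
case: k2 h2 lt12 eq12 => [|[|[|[|[|[|[|k2]]]]]]] h2 lt12 eq12 //;
  match type of eq12 with ?r = _ =>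
    rewrite -eq12; clear eq12; let x := fresh "x" in
    generalize r; intro x;
    move: (row (inord 0) A) (row (inord 1) A) (row (inord 2) A) (row (inord 3) A)
      (row (inord 4) A) (row (inord 5) A) (row (inord 6) A) => ? ? ? ? ? ? ?;
    rewrite /wedge_LB3 /pfaff6 ?B_xx;
    repeat match goal with |- context [B ?y x] => rewrite (B_skew y x) end
  end; ring.
Qed.

End SevenForm.

Section CrossCoordinates.
Variable R : realType.
Notation vec := 'rV[R]_7.
Implicit Types u v w : vec.

Lemma ev_inord (a b : nat) : (a < 7)%N -> (b < 7)%N ->
  (ev R (inord a)) 0 (inord b) = (a == b)%:R.
Proof. by move=> ha hb; rewrite mxE eqxx /= -val_eqE /= !inordK // eq_sym. Qed.

(* The coordinates of [cross u v], read off from [phi]; indices are 0-based. *)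
Definition cross7 (x y : nat -> R) (k : nat) : R :=
  match k with
  | 0 => x 1 * y 2 - x 2 * y 1 + x 3 * y 4 - x 4 * y 3 - x 5 * y 6 + x 6 * y 5
  | 1 => - x 0 * y 2 + x 2 * y 0 + x 3 * y 5 + x 4 * y 6 - x 5 * y 3 - x 6 * y 4
  | 2 => x 0 * y 1 - x 1 * y 0 + x 3 * y 6 - x 4 * y 5 + x 5 * y 4 - x 6 * y 3
  | 3 => - x 0 * y 4 - x 1 * y 5 - x 2 * y 6 + x 4 * y 0 + x 5 * y 1 + x 6 * y 2
  | 4 => x 0 * y 3 - x 1 * y 6 + x 2 * y 5 - x 3 * y 0 - x 5 * y 2 + x 6 * y 1
  | 5 => x 0 * y 6 + x 1 * y 3 - x 2 * y 4 - x 3 * y 1 + x 4 * y 2 - x 6 * y 0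
  | 6 => - x 0 * y 5 + x 1 * y 4 + x 2 * y 3 - x 3 * y 2 - x 4 * y 1 + x 5 * y 0
  | _ => 0
  end.

Lemma cross_coord u v k : (k < 7)%N ->
  (cross u v) 0 (inord k) = cross7 (fun n => u 0 (inord n)) (fun n => v 0 (inord n)) k.
Proof.
rewrite mxE; case: k => [|[|[|[|[|[|[|k]]]]]]] // _;
  rewrite /phi /e3 /= ?ev_inord //=; ring.
Qed.

Lemma row7P u v :
  u 0 (inord 0) = v 0 (inord 0) -> u 0 (inord 1) = v 0 (inord 1) ->
  u 0 (inord 2) = v 0 (inord 2) -> u 0 (inord 3) = v 0 (inord 3) ->
  u 0 (inord 4) = v 0 (inord 4) -> u 0 (inord 5) = v 0 (inord 5) ->
  u 0 (inord 6) = v 0 (inord 6) -> u = v.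
Proof.
move=> h0 h1 h2 h3 h4 h5 h6; apply/rowP => i; rewrite -(inord_val i).
by case: i => [[|[|[|[|[|[|[|m]]]]]]] hm].
Qed.

Lemma dot7E u v : dot u v = u 0 (inord 0) * v 0 (inord 0) + u 0 (inord 1) * v 0 (inord 1)
  + u 0 (inord 2) * v 0 (inord 2) + u 0 (inord 3) * v 0 (inord 3)
  + u 0 (inord 4) * v 0 (inord 4) + u 0 (inord 5) * v 0 (inord 5)
  + u 0 (inord 6) * v 0 (inord 6).
Proof.
rewrite /dot (eq_bigr (fun i : 'I_7 => u 0 (inord i) * v 0 (inord i))); last first.
  by move=> i _; rewrite inord_val.
rewrite -(big_mkord xpredT (fun i => u 0 (inord i) * v 0 (inord i))).
by rewrite /index_iota /= !big_cons big_nil addr0 !addrA.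
Qed.

Lemma coordD u v k : (u + v) 0 k = u 0 k + v 0 k. Proof. by rewrite mxE. Qed.
Lemma coordZ a u k : (a *: u) 0 k = a * u 0 k. Proof. by rewrite mxE. Qed.
Lemma coordN u k : (- u) 0 k = - u 0 k. Proof. by rewrite mxE. Qed.
Lemma coord0 k : (0 : vec) 0 k = 0. Proof. by rewrite mxE. Qed.

Definition coordE := (coordD, coordZ, coordN, coord0).

End CrossCoordinates.

Ltac coord_ring := rewrite ?dot7E; repeat rewrite ?coordE ?cross_coord //=; ring.
Ltac row7_ring := apply: row7P; coord_ring.

Section CrossIdentities.
Variable R : realType.
Notation vec := 'rV[R]_7.
Implicit Types u v w : vec.

Lemma crossDl u v w : cross (u + v) w = cross u w + cross v w. Proof. row7_ring. Qed.
Lemma crossDr u v w : cross w (u + v) = cross w u + cross w v. Proof. row7_ring. Qed.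
Lemma crossZl a u w : cross (a *: u) w = a *: cross u w. Proof. row7_ring. Qed.
Lemma crossZr a u w : cross w (a *: u) = a *: cross w u. Proof. row7_ring. Qed.
Lemma crossNl u w : cross (- u) w = - cross u w. Proof. row7_ring. Qed.
Lemma crossNr u w : cross w (- u) = - cross w u. Proof. row7_ring. Qed.
Lemma cross0l u : cross 0 u = 0. Proof. row7_ring. Qed.
Lemma cross0r u : cross u 0 = 0. Proof. row7_ring. Qed.
Lemma crossC u v : cross v u = - cross u v. Proof. row7_ring. Qed.
Lemma crossvv u : cross u u = 0. Proof. row7_ring. Qed.

Lemma dotC u v : dot u v = dot v u. Proof. coord_ring. Qed.
Lemma dotDl u v w : dot (u + v) w = dot u w + dot v w. Proof. coord_ring. Qed.
Lemma dotDr u v w : dot w (u + v) = dot w u + dot w v. Proof. coord_ring. Qed.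
Lemma dotZl a u w : dot (a *: u) w = a * dot u w. Proof. coord_ring. Qed.
Lemma dotZr a u w : dot w (a *: u) = a * dot w u. Proof. coord_ring. Qed.
Lemma dotNl u w : dot (- u) w = - dot u w. Proof. coord_ring. Qed.
Lemma dotNr u w : dot w (- u) = - dot w u. Proof. coord_ring. Qed.
Lemma dot0l u : dot 0 u = 0. Proof. coord_ring. Qed.

Lemma dot_crossC u v w : dot (cross u v) w = - dot (cross u w) v. Proof. coord_ring. Qed.
Lemma dot_cross_cyc u v w : dot (cross u v) w = dot (cross v w) u. Proof. coord_ring. Qed.
Lemma dot_crossl u v : dot (cross u v) u = 0. Proof. coord_ring. Qed.
Lemma dot_crossr u v : dot (cross u v) v = 0. Proof. coord_ring. Qed.

Lemma dot_cross_cross u v w :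
  dot (cross u v) (cross u w) = dot u u * dot v w - dot u v * dot u w.
Proof. coord_ring. Qed.

Lemma cross_cross_same u v : cross u (cross u v) = dot u v *: u - dot u u *: v.
Proof. row7_ring. Qed.

Lemma cross_cross_assoc u v w :
  cross u (cross v w) + cross (cross u v) w = (2 * dot u w) *: v - dot u v *: w - dot v w *: u.
Proof. row7_ring. Qed.

Lemma dot_ev u k : dot u (ev R k) = u 0 k.
Proof.
rewrite /dot (bigD1 k) //= big1 => [|i ik]; rewrite !mxE ?eqxx ?mulr1 ?addr0 //.
by rewrite (negPf ik) mulr0.
Qed.

Lemma dot_mxE u v : (u *m v^T) 0 0 = dot u v.
Proof. by rewrite mxE; apply: eq_bigr => k _; rewrite !mxE. Qed.

Lemma mulmx_trE m p (A : 'M[R]_(m, 7)) (B : 'M[R]_(p, 7)) i j :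
  (A *m B^T) i j = dot (row i A) (row j B).
Proof. by rewrite mxE; apply: eq_bigr => k _; rewrite !mxE. Qed.

Lemma dot_ge0 v : 0 <= dot v v.
Proof. by rewrite /dot sumr_ge0 // => i _; rewrite -expr2 sqr_ge0. Qed.

Lemma dot_eq0 v : (dot v v == 0) = (v == 0).
Proof.
apply/idP/eqP => [|->]; last by rewrite dot0l.
rewrite /dot psumr_eq0 => [/allP v0|i _]; last by rewrite -expr2 sqr_ge0.
by apply/rowP => i; have := v0 i (mem_index_enum _); rewrite -expr2 sqrf_eq0 mxE => /eqP.
Qed.

Lemma cross_cross_unit u v : dot u u = 1 -> dot u v = 0 -> cross u (cross u v) = - v.
Proof. by move=> uu uv; rewrite cross_cross_same uu uv scale0r scale1r sub0r. Qed.

Lemma cross_cross_orth u v w : dot u v = 0 -> dot u w = 0 -> dot v w = 0 ->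
  cross u (cross v w) = - cross (cross u v) w.
Proof.
move=> uv uw vw; apply/eqP; rewrite -subr_eq0 opprK cross_cross_assoc uv uw vw.
by rewrite mulr0 !scale0r !subr0.
Qed.

Lemma exists_unit_multiple v : v != 0 -> exists k : R, dot (k *: v) (k *: v) = 1.
Proof.
move=> vn0; have vv_gt0 : 0 < dot v v by rewrite lt_def dot_eq0 vn0 dot_ge0.
exists (Num.sqrt (dot v v))^-1.
by rewrite dotZl dotZr mulrA -expr2 exprVn sqr_sqrtr ?dot_ge0 // mulVf // gt_eqF.
Qed.

Lemma dot_crossA u v w : dot u (cross v w) = dot (cross u v) w.
Proof. by rewrite dotC dot_cross_cyc dot_cross_cyc. Qed.

Lemma dot_cross_crossr u v w :
  dot (cross v u) (cross w u) = dot u u * dot v w - dot u v * dot u w.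
Proof. by rewrite (crossC u v) (crossC u w) dotNl dotNr opprK dot_cross_cross. Qed.

Lemma cross_wedge_detE u A :
  wedge_LB3_mx (dot u) (fun x y => dot (cross u x) y) A = - dot u u ^+ 2 * \det A.
Proof.
have L_lin a v w : dot u (a *: v + w) = a * dot u v + dot u w by rewrite dotDr dotZr.
have B_lin a v w y : dot (cross u (a *: v + w)) y = a * dot (cross u v) y + dot (cross u w) y.
  by rewrite crossDr crossZr dotDl dotZl.
have B_skew x y : dot (cross u y) x = - dot (cross u x) y by rewrite dot_crossC.
have B_xx x : dot (cross u x) x = 0 by rewrite dot_crossr.
rewrite (alternating_detE (wedge_LB3_multilinear L_lin B_lin B_skew)
  (wedge_LB3_alternating _ B_skew B_xx)) mulrC; congr (_ * _).
pose e k := ev R (inord k).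
have -> : wedge_LB3_mx (dot u) (fun x y => dot (cross u x) y) 1%:M =
    wedge_LB3 (dot u) (fun x y => dot (cross u x) y) (e 0) (e 1) (e 2) (e 3) (e 4) (e 5) (e 6).
  by rewrite /wedge_LB3_mx !row1.
have eL k : (k < 7)%N -> dot u (e k) = u 0 (inord k) by move=> _; rewrite dot_ev.
have eB i j : (i < 7)%N -> (j < 7)%N ->
    dot (cross u (e i)) (e j) = cross7 (fun n => u 0 (inord n)) (fun n => (i == n)%:R) j.
  move=> hi hj; rewrite dot_ev cross_coord //.
  by case: j hj => [|[|[|[|[|[|[|j]]]]]]] // _ /=; rewrite !ev_inord.
(* With the basis vectors abstracted, the rewrites below only match syntactically. *)
clearbody e; rewrite /wedge_LB3 /pfaff6 !eL // !eB //= dot7E.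
ring.
Qed.

End CrossIdentities.

Section SymmetricEigen.
Variable R : rcfType.
Local Notation C := R[i].
Local Notation toC := (real_complex R).

Lemma map_conjc_real m n (A : 'M[R]_(m, n)) :
  map_mx (@conjc R) (map_mx toC A) = map_mx toC A.
Proof. by apply/matrixP => i j; rewrite !mxE conjc_real. Qed.

Lemma rV_norm2_neq0 n (v : 'rV[C]_n) :
  v != 0 -> (v *m (map_mx (@conjc R) v)^T) 0 0 != 0.
Proof.
move=> vn0; have ReD : {morph (@complex.Re R) : x y / x + y >-> x + y} by case=> ? ? [] ? ?.
have ReN : complex.Re ((v *m (map_mx (@conjc R) v)^T) 0 0)
    = \sum_i ((complex.Re (v 0 i)) ^+ 2 + (complex.Im (v 0 i)) ^+ 2).
  rewrite mxE (big_morph _ ReD (erefl _)); apply: eq_bigr => i _.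
  by rewrite !mxE; case: (v 0 i) => a b /=; ring.
apply: contra vn0 => /eqP N0; apply/eqP/rowP => j; rewrite mxE.
move: ReN; rewrite N0 /= => /esym/eqP; rewrite psumr_eq0 => [/allP/(_ j (mem_index_enum _))|i _].
  rewrite paddr_eq0 ?sqr_ge0 // !sqrf_eq0 => /andP[].
  by case: (v 0 j) => a b /= /eqP -> /eqP ->.
by rewrite addr_ge0 ?sqr_ge0.
Qed.

(* [v S vbar^T] equals both [z |v|^2] and its conjugate. *)
Lemma symmetric_eigenvalue_real n (S : 'M[R]_n) (v : 'rV[C]_n) (z : C) :
  S^T = S -> v != 0 -> v *m map_mx toC S = z *: v -> z = ((complex.Re z)%:C)%C.
Proof.
move=> Ssym vn0 vS; set S' := map_mx toC S; set vb := map_mx (@conjc R) v.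
have vbS : vb *m S' = conjc z *: vb.
  by have := congr1 (map_mx (@conjc R)) vS; rewrite map_mxM map_mxZ map_conjc_real.
have S'sym : S'^T = S' by apply/matrixP => i j; rewrite !mxE -[in LHS]Ssym mxE.
pose N := (v *m vb^T) 0 0.
have NE : (vb *m v^T) 0 0 = N by rewrite /N !mxE; apply: eq_bigr => i _; rewrite !mxE mulrC.
have E1 : (v *m S' *m vb^T) 0 0 = z * N by rewrite vS -scalemxAl mxE.
have E2 : (v *m S' *m vb^T) 0 0 = conjc z * N.
  have -> : (v *m S' *m vb^T) 0 0 = ((v *m S' *m vb^T)^T) 0 0 by rewrite [RHS]mxE.
  rewrite !trmx_mul trmxK S'sym mulmxA vbS.
  by rewrite -scalemxAl mxE NE.
have zE : z = conjc z by apply: (mulIf (rV_norm2_neq0 vn0)); rewrite -E1 -E2.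
case: z zE {E1 E2 vS vbS} => a b /= [] /eqP.
by rewrite -subr_eq0 opprK -mulr2n mulrn_eq0 /= => /eqP ->.
Qed.

Lemma symmetric_stable_eigenvector n m (S : 'M[R]_n) (W : 'M[R]_(m, n)) :
  S^T = S -> (W *m S <= W)%MS -> W != 0 ->
  exists (c : R) (v : 'rV[R]_n), [/\ v != 0, (v <= W)%MS & v *m S = c *: v].
Proof.
move=> Ssym WS Wn0; set V := row_base W.
have V_free : row_free V := row_base_free W.
have VS : (V *m S <= V)%MS by rewrite (eqmxMr S (eq_row_base W)) eq_row_base.
set Sc := conjmx V S.
have ScV : Sc *m V = V *m S by rewrite /Sc /conjmx mulmxKpV.
have : size (char_poly (map_mx toC Sc)) != 1%N.
  by rewrite size_char_poly eqSS mxrank_eq0.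
move=> /closed_rootP[z rz].
have /eigenvalueP[w wSc wn0] : eigenvalue (map_mx toC Sc) z by rewrite eigenvalue_root_char.
have wVS : (w *m map_mx toC V) *m map_mx toC S = z *: (w *m map_mx toC V).
  by rewrite -mulmxA -map_mxM -ScV map_mxM mulmxA wSc scalemxAl.
have wVn0 : w *m map_mx toC V != 0 by rewrite mulmx_free_eq0 ?row_free_map.
have zE := symmetric_eigenvalue_real Ssym wVn0 wVS.
have : root (char_poly Sc) (complex.Re z).
  by move: rz; rewrite {1}zE -map_char_poly fmorph_root.
rewrite -eigenvalue_root_char => /eigenvalueP[u uSc un0].
exists (complex.Re z), (u *m V); split.
- by rewrite mulmx_free_eq0.
- by rewrite (submx_trans (submxMl _ _)) // eq_row_base.
- by rewrite -mulmxA -ScV mulmxA uSc scalemxAl.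
Qed.

Lemma symmetric_stable_orthogonal n m (S : 'M[R]_n) (U : 'M[R]_(m, n)) :
  S^T = S -> (U *m S <= U)%MS -> (kermx U^T *m S <= kermx U^T)%MS.
Proof.
move=> Ssym /submxP[D US]; apply/sub_kermxP.
by rewrite -mulmxA -{1}Ssym -trmx_mul US trmx_mul mulmxA mulmx_ker mul0mx.
Qed.

End SymmetricEigen.

Section CayleyTriple.
Variable R : realType.
Notation vec := 'rV[R]_7.

Definition cayley_triple (a b c : vec) : Prop :=
  [/\ [/\ dot a a = 1, dot b b = 1 & dot c c = 1],
      [/\ dot a b = 0, dot a c = 0 & dot b c = 0] & dot (cross a b) c = 0].

Definition frame_vectors (a b c : vec) : seq vec :=
  [:: a; b; cross a b; c; cross a c; cross b c; cross (cross a b) c].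

Definition frame_of (a b c : vec) : 'M[R]_7 := \matrix_(i < 7) nth 0 (frame_vectors a b c) i.

Variables a b c : vec.
Hypothesis abc : cayley_triple a b c.
Local Notation F := (frame_of a b c).
Local Notation f k := (row (inord k) F).

Lemma row_frame_of k : (k < 7)%N -> f k = nth 0 (frame_vectors a b c) k.
Proof. by move=> hk; rewrite rowK inordK. Qed.

Let ha : dot a a = 1. Proof. by case: abc => -[]. Qed.
Let hb : dot b b = 1. Proof. by case: abc => -[]. Qed.
Let hc : dot c c = 1. Proof. by case: abc => -[]. Qed.
Let hab : dot a b = 0. Proof. by case: abc => _ []. Qed.
Let hac : dot a c = 0. Proof. by case: abc => _ []. Qed.
Let hbc : dot b c = 0. Proof. by case: abc => _ []. Qed.
Let habc : dot (cross a b) c = 0. Proof. by case: abc. Qed.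
Let hca : dot c a = 0. Proof. by rewrite dotC. Qed.
Let hcb : dot c b = 0. Proof. by rewrite dotC. Qed.
Let hcab : dot c (cross a b) = 0. Proof. by rewrite dotC. Qed.
Let haab : dot a (cross a b) = 0. Proof. by rewrite dotC dot_crossl. Qed.
Let hbab : dot b (cross a b) = 0. Proof. by rewrite dotC dot_crossr. Qed.
Let habab : dot (cross a b) (cross a b) = 1.
Proof. by rewrite dot_cross_cross ha hb hab; ring. Qed.

Lemma cross_a_ab : cross a (cross a b) = - b.
Proof. exact: cross_cross_unit. Qed.
Lemma cross_b_ab : cross b (cross a b) = a.
Proof. by rewrite -(opprK (cross a b)) -crossC crossNr cross_cross_unit ?opprK // dotC. Qed.
Lemma cross_ab_a : cross (cross a b) a = b.
Proof. by rewrite crossC cross_a_ab opprK. Qed.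
Lemma cross_ab_b : cross (cross a b) b = - a.
Proof. by rewrite crossC cross_b_ab. Qed.

Lemma span3_cross_closed : associative_set (span3 a b (cross a b)).
Proof.
move=> u v [c1 [c2 [c3 ->]]] [d1 [d2 [d3 ->]]].
exists (c2 * d3 - c3 * d2), (c3 * d1 - c1 * d3), (c1 * d2 - c2 * d1).
rewrite !(crossDl, crossDr, crossZl, crossZr) !crossvv (crossC a b).
rewrite cross_a_ab cross_b_ab cross_ab_a cross_ab_b.
row7_ring.
Qed.

Lemma frame_vectors_gram i j : (i < 7)%N -> (j < 7)%N ->
  dot (nth 0 (frame_vectors a b c) i) (nth 0 (frame_vectors a b c) j) = (i == j)%:R.
Proof.
wlog le_ij : i j / (i <= j)%N.
  move=> wlog_le hi hj; case: (leqP i j) => [|/ltnW] ij; first exact: wlog_le.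
  by rewrite dotC eq_sym wlog_le.
case: i le_ij => [|[|[|[|[|[|[|i]]]]]]] //; case: j => [|[|[|[|[|[|[|j]]]]]]] //= _ _ _.
- by rewrite dot_crossA crossvv dot0l.
- by rewrite dot_crossA.
- by rewrite dot_crossA cross_a_ab dotNl hbc oppr0.
- by rewrite dot_crossA crossC dotNl habc oppr0.
- by rewrite dot_crossA crossvv dot0l.
- by rewrite dot_crossA cross_b_ab.
- by rewrite dot_cross_cross ha hbc hab; ring.
- by rewrite dot_crossA cross_ab_b dotNl hac oppr0.
- by rewrite dot_crossA crossvv dot0l.
- by rewrite dotC dot_crossr.
- by rewrite dotC dot_crossr.
- by rewrite dotC dot_crossr.
- by rewrite dot_cross_cross ha hc hac; ring.
- by rewrite dot_cross_crossr hc hab hca; ring.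
- by rewrite dot_cross_crossr hc haab hca; ring.
- by rewrite dot_cross_cross hb hc hbc; ring.
- by rewrite dot_cross_crossr hc hbab hcb; ring.
- by rewrite dot_cross_crossr hc habab hcab; ring.
Qed.

Lemma frame_gram i j : (i < 7)%N -> (j < 7)%N -> dot (f i) (f j) = (i == j)%:R.
Proof. by move=> hi hj; rewrite !row_frame_of // frame_vectors_gram. Qed.

Lemma frame_of_orthonormal (i j : 'I_7) : dot (row i F) (row j F) = (i == j)%:R.
Proof. by have := frame_gram (ltn_ord i) (ltn_ord j); rewrite !inord_val. Qed.

Lemma frame_of_mulmxT : F *m F^T = 1%:M.
Proof.
by apply/matrixP => i j; rewrite mulmx_trE frame_of_orthonormal mxE.
Qed.

Lemma frame_expand x : x = \sum_(0 <= k < 7) dot x (f k) *: f k.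
Proof.
rewrite big_mkord -[LHS]mulmx1 -(mulmx1C frame_of_mulmxT) mulmxA mulmx_sum_row.
by apply: eq_bigr => k _; rewrite inord_val mulmx_trE row_id.
Qed.

Lemma det_frame_of : \det F = 1.
Proof.
have c00 : cross (f 0) (f 0) = 0 by rewrite crossvv.
have c01 : cross (f 0) (f 1) = f 2 by rewrite !rowK !inordK.
have c02 : cross (f 0) (f 2) = - f 1 by rewrite !rowK !inordK //= cross_a_ab.
have c03 : cross (f 0) (f 3) = f 4 by rewrite !rowK !inordK.
have c04 : cross (f 0) (f 4) = - f 3 by rewrite !rowK !inordK //= cross_cross_unit.
have c05 : cross (f 0) (f 5) = - f 6 by rewrite !rowK !inordK //= cross_cross_orth.
have := cross_wedge_detE (f 0) F.
rewrite /wedge_LB3_mx /wedge_LB3 /pfaff6 c00 c01 c02 c03 c04 c05.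
rewrite ?dotNl ?dot0l !frame_gram //=.
lra.
Qed.

Lemma frame_of_G2_adapted : G2_adapted F.
Proof.
split; first exact: frame_of_orthonormal.
  by rewrite det_frame_of ltr01.
by rewrite /= !row_frame_of.
Qed.

End CayleyTriple.

Section G2Action.
Variable R : realType.
Notation vec := 'rV[R]_7.
Implicit Types (u v w : vec) (X : 'M[R]_7).

Lemma bformE X u v : bform X u v = dot (u *m X) v.
Proof. by rewrite /bform dot_mxE. Qed.

Lemma skew_dotC X u v : X^T = - X -> dot u (v *m X) = - dot (u *m X) v.
Proof. by move=> sX; rewrite -!dot_mxE trmx_mul sX mulNmx mulmxN mulmxA [LHS]mxE. Qed.

Lemma g2_mul_cross_eigen X a v m : in_g2 X -> dot a a = 1 -> a *m X = 0 ->
  dot a v = 0 -> v *m X = - m *: cross a v -> cross a v *m X = m *: v.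
Proof.
move=> [_ X_der] aa aX av vX.
by rewrite X_der aX cross0l add0r vX crossZr cross_cross_unit // scalerN scaleNr opprK.
Qed.

Lemma mxrank_from_ker (K : fieldType) n k (X : 'M[K]_n) (Q : 'M[K]_(k, n)) :
  row_free Q -> (forall x : 'rV_n, x *m X = 0 <-> (x <= Q)%MS) -> \rank X = (n - k)%N.
Proof.
move=> Q_free kerXQ.
have : \rank (kermx X) = \rank Q.
  apply: eqmx_rank; apply/andP; split; apply/rV_subP => v.
    by move/sub_kermxP/kerXQ.
  by move/kerXQ/sub_kermxP.
by rewrite mxrank_ker (eqP Q_free) => <-; rewrite subKn // rank_leq_row.
Qed.

Definition rows3 (u v w : vec) : 'M[R]_(3, 7) := \matrix_(i < 3) nth 0 [:: u; v; w] i.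

Lemma sub_rows3 u v w x : (x <= rows3 u v w)%MS <-> span3 u v w x.
Proof.
split.
  case/submxP => D ->; rewrite mulmx_sum_row !big_ord_recl big_ord0 addr0 !rowK /=.
  by exists (D 0 ord0), (D 0 (lift ord0 ord0)), (D 0 (lift ord0 (lift ord0 ord0))); rewrite !addrA.
case=> [c1 [c2 [c3 ->]]]; apply/submxP; exists (\row_(i < 3) nth 0 [:: c1; c2; c3] i).
by rewrite mulmx_sum_row !big_ord_recl big_ord0 addr0 !rowK !mxE /= !addrA.
Qed.

Lemma rows3_free u v w :
  dot u u = 1 -> dot v v = 1 -> dot w w = 1 -> dot u v = 0 -> dot u w = 0 -> dot v w = 0 ->
  row_free (rows3 u v w).
Proof.
move=> uu vv ww uv uw vw; apply/row_freeP; exists (rows3 u v w)^T.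
apply/matrixP => i j; rewrite mulmx_trE !rowK !mxE.
by case: i j => [[|[|[|i]]] hi] // [[|[|[|j]]] hj] //=; rewrite // dotC.
Qed.

Lemma sub_rV_span1 u x : (x <= u)%MS <-> span1 u x.
Proof. by split => [/sub_rVP | ?]; last apply/sub_rVP. Qed.

Lemma rV_free u : dot u u = 1 -> row_free u.
Proof. by move=> uu; rewrite /row_free rank_rV -dot_eq0 uu oner_eq0. Qed.

Section Frame.
Variables (a b c : vec) (X : 'M[R]_7) (mu nu : R).
Hypotheses (abc : cayley_triple a b c) (X_g2 : in_g2 X).
Hypotheses (Xa : a *m X = 0) (Xb : b *m X = - mu *: cross a b) (Xc : c *m X = - nu *: cross a c).
Local Notation F := (frame_of a b c).
Local Notation f k := (row (inord k) F).

Let ha : dot a a = 1. Proof. by case: abc => -[]. Qed.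
Let hab : dot a b = 0. Proof. by case: abc => _ []. Qed.
Let hac : dot a c = 0. Proof. by case: abc => _ []. Qed.
Let hbc : dot b c = 0. Proof. by case: abc => _ []. Qed.
Let habc : dot (cross a b) c = 0. Proof. by case: abc. Qed.

Lemma mulX_ab : cross a b *m X = mu *: b.
Proof. exact: g2_mul_cross_eigen. Qed.

Lemma mulX_ac : cross a c *m X = nu *: c.
Proof. exact: g2_mul_cross_eigen. Qed.

Lemma cross_b_ac : cross b (cross a c) = cross (cross a b) c.
Proof.
rewrite cross_cross_orth ?(crossC a b) ?crossNl ?opprK //.
by rewrite dotC.
Qed.

Lemma mulX_bc : cross b c *m X = - (mu + nu) *: cross (cross a b) c.
Proof.
have [_ X_der] := X_g2.
by rewrite X_der Xb Xc crossZl crossZr cross_b_ac -scalerDl opprD.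
Qed.

Lemma mulX_abc : cross (cross a b) c *m X = (mu + nu) *: cross b c.
Proof.
have [_ X_der] := X_g2.
have cross_ab_ac : cross (cross a b) (cross a c) = - cross b c.
  by rewrite cross_cross_orth ?(cross_ab_a abc) ?dot_crossl.
by rewrite X_der mulX_ab Xc crossZl crossZr cross_ab_ac scalerN scaleNr opprK scalerDl.
Qed.

Let fX0 : f 0 *m X = 0. Proof. by rewrite row_frame_of. Qed.
Let fX1 : f 1 *m X = - mu *: f 2. Proof. by rewrite !row_frame_of. Qed.
Let fX2 : f 2 *m X = mu *: f 1. Proof. by rewrite !row_frame_of //= mulX_ab. Qed.
Let fX3 : f 3 *m X = - nu *: f 4. Proof. by rewrite !row_frame_of. Qed.
Let fX4 : f 4 *m X = nu *: f 3. Proof. by rewrite !row_frame_of //= mulX_ac. Qed.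
Let fX5 : f 5 *m X = - (mu + nu) *: f 6. Proof. by rewrite !row_frame_of //= mulX_bc. Qed.
Let fX6 : f 6 *m X = (mu + nu) *: f 5. Proof. by rewrite !row_frame_of //= mulX_abc. Qed.

Lemma frame_of_normal_form :
  \matrix_(i < 7, j < 7) bform X (row i F) (row j F) = normal_form mu nu (nu + mu).
Proof.
apply/matrixP => i j; rewrite !mxE bformE.
have -> : row i F = f i by rewrite inord_val.
have -> : row j F = f j by rewrite inord_val.
case: i j => [[|[|[|[|[|[|[|i]]]]]]] hi] // [[|[|[|[|[|[|[|j]]]]]]] hj] //=;
  rewrite ?fX0 ?fX1 ?fX2 ?fX3 ?fX4 ?fX5 ?fX6 ?dot0l ?dotZl ?frame_gram //=; ring.
Qed.

Lemma frame_ker_coords x : x *m X = 0 ->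
  [/\ mu * dot x (f 1) = 0, mu * dot x (f 2) = 0, nu * dot x (f 3) = 0, nu * dot x (f 4) = 0
    & (mu + nu) * dot x (f 5) = 0 /\ (mu + nu) * dot x (f 6) = 0].
Proof.
have [X_skew _] := X_g2.
move=> xX; have fk k : dot x (f k *m X) = 0 by rewrite skew_dotC // xX dot0l oppr0.
move: (fk 1%N) (fk 2%N) (fk 3%N) (fk 4%N) (fk 5%N) (fk 6%N).
rewrite fX1 fX2 fX3 fX4 fX5 fX6 !dotZr !mulNr => /eqP; rewrite oppr_eq0 => /eqP h2 h1.
move=> /eqP; rewrite oppr_eq0 => /eqP h4 h3 /eqP; rewrite oppr_eq0 => /eqP h6 h5.
by split.
Qed.

Lemma frame_ker_mu0 : mu = 0 -> 0 < nu -> forall x, x *m X = 0 <-> span3 a b (cross a b) x.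
Proof.
move=> mu0 nu_gt0 x; split => [xX | [c1 [c2 [c3 ->]]]]; last first.
  by rewrite !mulmxDl -!scalemxAl Xa Xb mulX_ab mu0 !(scaleNr, scale0r, scaler0, oppr0, addr0).
have [_ _ h3 h4 [h5 h6]] := frame_ker_coords xX; rewrite mu0 add0r in h5 h6.
have y0 k : nu * dot x (f k) = 0 -> dot x (f k) = 0.
  by move/eqP; rewrite mulf_eq0 gt_eqF //= => /eqP.
exists (dot x (f 0)), (dot x (f 1)), (dot x (f 2)).
rewrite {1}(frame_expand abc x) /index_iota /= !big_cons big_nil.
rewrite (y0 _ h3) (y0 _ h4) (y0 _ h5) (y0 _ h6) !scale0r !addr0 !addrA.
by rewrite !row_frame_of.
Qed.

Lemma frame_ker_pos : 0 < mu -> 0 < nu -> forall x, x *m X = 0 <-> span1 a x.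
Proof.
move=> mu_gt0 nu_gt0 x; split => [xX | [c1 ->]]; last by rewrite -scalemxAl Xa scaler0.
have [h1 h2 h3 h4 [h5 h6]] := frame_ker_coords xX.
have y0 m k : 0 < m -> m * dot x (f k) = 0 -> dot x (f k) = 0.
  by move=> m_gt0 /eqP; rewrite mulf_eq0 gt_eqF //= => /eqP.
have sum_gt0 : 0 < mu + nu by rewrite addr_gt0.
exists (dot x (f 0)); rewrite {1}(frame_expand abc x) /index_iota /= !big_cons big_nil.
rewrite (y0 _ _ mu_gt0 h1) (y0 _ _ mu_gt0 h2) (y0 _ _ nu_gt0 h3) (y0 _ _ nu_gt0 h4).
rewrite (y0 _ _ sum_gt0 h5) (y0 _ _ sum_gt0 h6) !scale0r !addr0.
by rewrite row_frame_of.
Qed.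

Lemma frame_rank_mu0 : mu = 0 -> 0 < nu -> \rank X = 4%N.
Proof.
move=> mu0 nu_gt0; have G := frame_vectors_gram abc.
apply: (mxrank_from_ker (rows3_free (G 0 0 _ _) (G 1 1 _ _) (G 2 2 _ _) (G 0 1 _ _)
  (G 0 2 _ _) (G 1 2 _ _))) => // x.
by rewrite sub_rows3; apply: frame_ker_mu0.
Qed.

Lemma frame_rank_pos : 0 < mu -> 0 < nu -> \rank X = 6%N.
Proof.
move=> mu_gt0 nu_gt0; apply: (mxrank_from_ker (rV_free ha)) => x.
by rewrite sub_rV_span1; apply: frame_ker_pos.
Qed.

Lemma frame_mulX_eq0 : mu = 0 -> nu = 0 -> X = 0.
Proof.
move=> mu0 nu0; apply/row_matrixP => i; rewrite row0 rowE.
rewrite (frame_expand abc (delta_mx 0 i)) mulmx_suml big_seq big1 // => k.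
rewrite mem_iota => /andP[_ hk]; rewrite -scalemxAl.
case: k hk => [|[|[|[|[|[|[|k]]]]]]] // _;
  by rewrite ?fX0 ?fX1 ?fX2 ?fX3 ?fX4 ?fX5 ?fX6 ?mu0 ?nu0 ?addr0 ?oppr0 ?scale0r ?scaler0.
Qed.

End Frame.
End G2Action.

Lemma det_skew_odd (K : numFieldType) n (A : 'M[K]_n) : odd n -> A^T = - A -> \det A = 0.
Proof.
move=> n_odd A_skew; apply/eqP.
have : \det A *+ 2 == 0.
  by rewrite mulr2n -{2}det_tr A_skew -scaleN1r detZ -signr_odd n_odd expr1 mulN1r subrr.
by rewrite mulrn_eq0.
Qed.

Lemma zero_sum_pair_sorted (R : realDomainType) (P : R -> R -> Prop) x y :
  (forall x y, P x y -> P y x) -> (forall x y, P x y -> P x (- (x + y))) ->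
  (forall x y, P x y -> P (- x) (- y)) -> P x y ->
  exists mu nu, [/\ 0 <= mu, mu <= nu & P mu nu].
Proof.
move=> PC PD PN Pxy.
have sorted x' y' : P x' y' -> 0 <= x' -> 0 <= y' -> exists mu nu, [/\ 0 <= mu, mu <= nu & P mu nu].
  move=> P' x'_ge0 y'_ge0; have [le|/ltW lt] := lerP x' y'; first by exists x', y'.
  by exists y', x'; split => //; apply: PC.
have sortedN x' y' : P x' y' -> x' <= 0 -> y' <= 0 ->
    exists mu nu, [/\ 0 <= mu, mu <= nu & P mu nu].
  by move=> P' x'_le0 y'_le0; apply: sorted (PN _ _ P') _ _; rewrite oppr_ge0.
(* Of the three numbers x, y, -(x + y), two have the same sign. *)
have Pxz := PD _ _ Pxy; have Pyz := PD _ _ (PC _ _ Pxy).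
have [hx|hx] := lerP 0 x; have [hy|hy] := lerP 0 y; have [hz|hz] := lerP 0 (- (x + y));
  first [ by apply: (sorted _ _ Pxy); lra | by apply: (sortedN _ _ Pxy); lra
        | by apply: (sorted _ _ Pxz); lra | by apply: (sortedN _ _ Pxz); lra
        | by apply: (sorted _ _ Pyz); lra | by apply: (sortedN _ _ Pyz); lra ].
Qed.

Section Existence.
Variable R : realType.
Notation vec := 'rV[R]_7.
Implicit Types (u v w : vec).
Variable X : 'M[R]_7.
Hypothesis X_g2 : in_g2 X.

Let X_skew : X^T = - X. Proof. by case: X_g2. Qed.
Let X_der u v : cross u v *m X = cross (u *m X) v + cross u (v *m X).
Proof. by case: X_g2. Qed.

Lemma g2_kernel_unit : exists a, dot a a = 1 /\ a *m X = 0.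
Proof.
have /det0P[v vn0 vX] : \det X == 0 by rewrite (det_skew_odd _ X_skew).
have [k vk] := exists_unit_multiple vn0.
by exists (k *: v); rewrite -scalemxAl vX scaler0.
Qed.

Definition cross_mx (a : vec) : 'M[R]_7 := \matrix_(i < 7) cross a (ev R i).

Lemma mul_cross_mx a v : v *m cross_mx a = cross a v.
Proof.
rewrite mulmx_sum_row {2}[v]row_sum_delta.
under eq_bigr do rewrite rowK.
elim/big_rec2: _ => [|i s _ _ ->]; first by rewrite cross0r.
by rewrite crossDr crossZr.
Qed.

Lemma cross_mx_skew a : (cross_mx a)^T = - cross_mx a.
Proof.
by apply/matrixP => i j; rewrite !mxE /phi /e3; ring.
Qed.

Lemma cross_mx_mulX a : a *m X = 0 -> cross_mx a *m X = X *m cross_mx a.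
Proof.
move=> aX; apply/row_matrixP => i.
by rewrite !row_mul rowK mul_cross_mx X_der aX cross0l add0r rowE.
Qed.

Lemma cross_mx_mulX_sym a : a *m X = 0 -> (X *m cross_mx a)^T = X *m cross_mx a.
Proof.
by move=> aX; rewrite trmx_mul cross_mx_skew X_skew mulmxN mulNmx opprK cross_mx_mulX.
Qed.

Lemma cross_mx_eigen a v c : dot a a = 1 -> a *m X = 0 -> dot a v = 0 ->
  v *m (X *m cross_mx a) = c *: v -> v *m X = - c *: cross a v.
Proof.
move=> aa aX av; rewrite mulmxA mul_cross_mx => /(congr1 (cross a)).
rewrite cross_cross_same aa scale1r skew_dotC // aX dot0l oppr0 scale0r sub0r crossZr.
by move=> e; rewrite scaleNr -e opprK.
Qed.

Lemma g2_orth_eigenvector k (U : 'M[R]_(k, 7)) a :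
  dot a a = 1 -> a *m X = 0 -> (k < 7)%N -> (a <= U)%MS ->
  (U *m (X *m cross_mx a) <= U)%MS ->
  exists v c, [/\ dot v v = 1, v *m U^T = 0 & v *m X = - c *: cross a v].
Proof.
move=> aa aX k_lt7 aU US.
have S_sym := cross_mx_mulX_sym aX.
have W_stable := symmetric_stable_orthogonal S_sym US.
have Wn0 : kermx U^T != 0.
  by rewrite -mxrank_eq0 mxrank_ker mxrank_tr subn_eq0 -ltnNge (leq_ltn_trans (rank_leq_row U)).
have [c [v [vn0 vW vS]]] := symmetric_stable_eigenvector S_sym W_stable Wn0.
have vU : v *m U^T = 0 by apply/sub_kermxP.
have av : dot a v = 0.
  by case/submxP: aU => D aDU; rewrite dotC -dot_mxE aDU trmx_mul mulmxA vU mul0mx mxE.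
have [s vs] := exists_unit_multiple vn0.
exists (s *: v), c; split => //; first by rewrite -scalemxAl vU scaler0.
by rewrite -scalemxAl (cross_mx_eigen aa aX av vS) crossZr !scalerA mulrC.
Qed.

Definition g2_eigen_triple a b c (mu nu : R) :=
  [/\ cayley_triple a b c, a *m X = 0, b *m X = - mu *: cross a b & c *m X = - nu *: cross a c].

Lemma g2_eigen_triple_exists : exists a b c mu nu, g2_eigen_triple a b c mu nu.
Proof.
have [a [aa aX]] := g2_kernel_unit.
have a_stable : (a *m (X *m cross_mx a) <= a)%MS by rewrite mulmxA aX mul0mx sub0mx.
have [g [mu [gg ga gX]]] := g2_orth_eigenvector aa aX (erefl : (1 < 7)%N) (submx_refl a) a_stable.
have ag : dot a g = 0 by rewrite dotC -dot_mxE ga mxE.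
have agX := g2_mul_cross_eigen X_g2 aa aX ag gX.
pose U := rows3 a g (cross a g).
have aU : (a <= U)%MS by apply/sub_rows3; exists 1, 0, 0; rewrite !scale0r !addr0 scale1r.
have U_stable : (U *m (X *m cross_mx a) <= U)%MS.
  apply/row_subP => i; rewrite row_mul rowK mulmxA mul_cross_mx; apply/sub_rows3.
  case: i => [[|[|[|i]]] hi] //=.
  - by exists 0, 0, 0; rewrite aX cross0r !scale0r !addr0.
  - exists 0, mu, 0; rewrite gX crossZr cross_cross_unit //.
    by rewrite !scale0r add0r addr0 scalerN scaleNr opprK.
  - by exists 0, 0, mu; rewrite agX crossZr !scale0r !add0r.
have [h [nu [hh hU hX]]] := g2_orth_eigenvector aa aX (erefl : (3 < 7)%N) aU U_stable.
have hU_dot (i : 'I_3) : dot h (row i U) = 0.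
  by move: (mulmx_trE h U 0 i); rewrite hU mxE row_id => <-.
have := hU_dot 0; have := hU_dot 1; have := hU_dot 2; rewrite !rowK /= => agh gh ah.
by exists a, g, h, mu, nu; split => //; split; [split | split | ]; rewrite // dotC.
Qed.

Lemma g2_eigen_tripleC a b c mu nu :
  g2_eigen_triple a b c mu nu -> g2_eigen_triple a c b nu mu.
Proof.
case=> [[[aa bb cc] [ab ac bc] abc] aX bX cX]; split => //.
by split; [split | split; rewrite // dotC | rewrite dot_crossC abc oppr0].
Qed.

Lemma g2_eigen_triple_cross a b c mu nu :
  g2_eigen_triple a b c mu nu -> g2_eigen_triple a b (cross b c) mu (- (mu + nu)).
Proof.
case=> abc aX bX cX; have G := frame_vectors_gram abc.
split => //; last first.
  have [_ [ab ac bc] _] := abc.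
  by rewrite (mulX_bc abc X_g2 bX cX) cross_cross_orth // opprK scalerN scaleNr.
split; [split | split | ]; [exact: (G 0 0) | exact: (G 1 1) | exact: (G 5 5) | exact: (G 0 1)
  | exact: (G 0 5) | exact: (G 1 5) | exact: (G 2 5)].
Qed.

Lemma g2_eigen_tripleN a b c mu nu :
  g2_eigen_triple a b c mu nu -> g2_eigen_triple (- a) b c (- mu) (- nu).
Proof.
case=> [[[aa bb cc] [ab ac bc] abc] aX bX cX]; split.
- by split; [split | split | ]; rewrite ?dotNl ?dotNr ?crossNl ?dotNl ?opprK ?aa ?ab ?ac ?abc ?oppr0.
- by rewrite mulNmx aX oppr0.
- by rewrite bX crossNl scalerN scaleNr opprK.
- by rewrite cX crossNl scalerN scaleNr opprK.
Qed.

Lemma g2_sorted_eigen_triple :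
  exists a b c mu nu, g2_eigen_triple a b c mu nu /\ 0 <= mu <= nu.
Proof.
have [a [b [c [mu [nu E]]]]] := g2_eigen_triple_exists.
pose P mu nu := exists a b c, g2_eigen_triple a b c mu nu.
have [||||m [n [m_ge0 m_le_n [a' [b' [c' E']]]]]] := @zero_sum_pair_sorted _ P mu nu.
- by move=> x y [a' [b' [c' /g2_eigen_tripleC E']]]; exists a', c', b'.
- by move=> x y [a' [b' [c' /g2_eigen_triple_cross E']]]; exists a', b', (cross b' c').
- by move=> x y [a' [b' [c' /g2_eigen_tripleN E']]]; exists (- a'), b', c'.
- by exists a, b, c.
by exists a', b', c', m, n; rewrite m_ge0 m_le_n.
Qed.

End Existence.

Theorem corollary3p7 (R : realType) (X : 'M[R]_7) :
  in_g2 X ->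
  exists (F : 'M[R]_7) (lam nu mu : R),
    let f (n : nat) : 'rV[R]_7 := row (inord n.-1) F in
    G2_adapted F /\
    [/\ lam >= nu /\ nu >= mu /\ mu >= 0 /\ lam = nu + mu,
        (\matrix_(i < 7, j < 7) bform X (row i F) (row j F)) = normal_form mu nu lam,
        [\/ lam = mu, 0 < lam /\ mu = 0 | mu < lam /\ 0 < mu] &
      [/\
        lam = mu -> lam = 0 /\ mu = 0 /\ nu = 0 /\ X = 0,
        0 < lam /\ mu = 0 ->
          [/\ lam = nu, \rank X = 4%N,
              (forall x, kerX X x <-> span3 (f 1%N) (f 2%N) (f 3%N) x) &
              associative_set (span3 (f 1%N) (f 2%N) (f 3%N))] &
        mu < lam /\ 0 < mu ->
          \rank X = 6%N /\ (forall x, kerX X x <-> span1 (f 1%N) x)]].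
Proof.
move=> X_g2.
have [a [b [c [mu [nu [[abc Xa Xb Xc] /andP[mu_ge0 mu_le_nu]]]]]]] := g2_sorted_eigen_triple X_g2.
exists (frame_of a b c), (nu + mu), nu, mu => f.
rewrite {}/f /= !row_frame_of //=.
split; first exact: frame_of_G2_adapted.
split; first by do !split; lra.
- exact: frame_of_normal_form.
- have [mu_gt0|mu_le0] := ltrP 0 mu; first by apply: Or33; split => //; lra.
  have [nu_gt0|nu_le0] := ltrP 0 nu; [apply: Or32; split | apply: Or31]; lra.
split.
- move=> lam_mu; have [nu0 mu0] : nu = 0 /\ mu = 0 by lra.
  by rewrite nu0 mu0 addr0; do !split => //; apply: frame_mulX_eq0 abc X_g2 Xa Xb Xc mu0 nu0.
- move=> [lam_gt0 mu0]; have nu_gt0 : 0 < nu by lra.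
  split; first by rewrite mu0 addr0.
  + exact: frame_rank_mu0 abc X_g2 Xa Xb Xc mu0 nu_gt0.
  + exact: frame_ker_mu0 abc X_g2 Xa Xb Xc mu0 nu_gt0.
  + exact: span3_cross_closed abc.
- move=> [lam_gt_mu mu_gt0]; have nu_gt0 : 0 < nu by lra.
  split; first exact: frame_rank_pos abc X_g2 Xa Xb Xc mu_gt0 nu_gt0.
  exact: frame_ker_pos abc X_g2 Xa Xb Xc mu_gt0 nu_gt0.
Qed.
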